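(* Consider the discrete-time system $x_{k+1}=f(x_k,u_k,w_k)$, $y_k=h(x_k,v_k)$ with $x_k\in\mathbb{X}\subset\mathbb{R}^n$, $u_k\in\mathbb{U}\subseteq\mathbb{R}^m$, $w_k\in\mathbb{R}^q$, $v_k\in\mathbb{V}\subset\mathbb{R}^r$, $y_k\in\mathbb{Y}\subset\mathbb{R}^p$, $f,h$ continuously differentiable, $\mathbb{Z}:=\mathbb{X}\times\mathbb{U}\times\mathbb{R}^q\times\mathbb{V}\times\mathbb{Y}$, and suppose it is strongly nonlinearly detectable. Let $\alpha_1,\alpha_2\in\mathcal{K}_\infty$, $\sigma_v,\sigma_y\in\mathcal{K}$, $\mu\in(0,1)$ and $V:\mathbb{X}\times\mathbb{X}\to\mathbb{R}_{\ge0}$ satisfy $\alpha_1(\|x-\widetilde{x}\|)\le V(x,\widetilde{x})\le\alpha_2(\|x-\widetilde{x}\|)$ and $V(f(x,u,w),f(\widetilde{x},u,\widetilde{w}))\le\mu V(x,\widetilde{x})+\sigma_v(\|v-\widetilde{v}\|)+\sigma_v(\|v^+-\widetilde{v}^+\|)+\sigma_y(\|y-\widetilde{y}\|)+\sigma_y(\|y^+-\widetilde{y}^+\|)$ for all $(x,u,w,v,y),(\widetilde{x},u,\widetilde{w},\widetilde{v},\widetilde{y})\in\mathbb{Z}$, $v^+,\widetilde{v}^+\in\mathbb{V}$ with $y=h(x,v)$, $\widetilde{y}=h(\widetilde{x},\widetilde{v})$, $y^+=h(f(x,u,w),v^+)\in\mathbb{Y}$, $\widetilde{y}^+=h(f(\widetilde{x},u,\widetilde{w}),\widetilde{v}^+)\in\mathbb{Y}$.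 Fix a horizon $N\in\mathbb{N}$, let $N_k:=\min(N,k)$, and define the moving horizon estimator $MHE_{N_k}$: given priors $\bar{x}_0\in\mathbb{X}$ and $\bar{v}_i\in\mathbb{V}$, at each $k\ge0$ minimize $$\mu^{N_k}\alpha_2(2\|\hat{x}_{k-N_k|k}-\hat{x}_{k-N_k}\|)+\sum_{j=0}^{N_k}2\mu^{j-1}\sigma_v(2\|\hat{v}_{k-j|k}-\bar{v}_{k-j}\|)+\sum_{j=0}^{N_k}2\mu^{j-1}\sigma_y(\|y_{k-j}-\hat{y}_{k-j|k}\|)$$ over $\hat{x}_{k-N_k|k}$, $(\hat{v}_{j|k})$, $(\hat{w}_{j|k})$ subject to $\hat{x}_{j+1|k}=f(\hat{x}_{j|k},u_j,\hat{w}_{j|k})$ for $j\in\{k-N_k,\dots,k-1\}$ and $\hat{y}_{j|k}=h(\hat{x}_{j|k},\hat{v}_{j|k})$, $\hat{x}_{j|k}\in\mathbb{X}$, $\hat{v}_{j|k}\in\mathbb{V}$, $\hat{w}_{j|k}\in\mathbb{R}^q$, $\hat{y}_{j|k}\in\mathbb{Y}$ for $j\in\{k-N_k,\dots,k\}$; the estimate is $\hat{x}^\star_{k|k}$ from an optimal solution, and the priors are $\hat{x}_0:=\bar{x}_0$ and $\hat{x}_k:=\hat{x}^\star_{k|k}$ for $k>0$. If $N$ is such that there is $\rho\in(0,1)$ with $$2\mu^N\alpha_2\big(2\alpha_1^{-1}(r)\big)<\rho r\quad\text{for all } r\in(0,\infty),$$ then $MHE_{N_k}$ is an unknown input state esti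mator.
   Context: A solution of the system is a sequence in $\mathbb{Z}^\infty$ satisfying the system equations. $\mathcal{K}$, $\mathcal{K}_\infty$, $\mathcal{KL}$ are the usual comparison function classes; a $\mathcal{KL}$-function $\beta$ is summable if there is $\alpha\in\mathcal{K}$ with $\sum_{k\ge0}\beta(r,k)\le\alpha(r)$ for all $r\ge0$. Strong nonlinear detectability: there exist $\alpha\in\mathcal{K}_\infty$, $\alpha_0\in\mathcal{KL}$, summable $\alpha_v,\alpha_y\in\mathcal{KL}$ with $\alpha(\|x_k-\widetilde{x}_k\|)\le\alpha_0(\|x_0-\widetilde{x}_0\|,k)+\sum_{i=0}^k(\alpha_v(\|v_{k-i}-\widetilde{v}_{k-i}\|,i)+\alpha_y(\|y_{k-i}-\widetilde{y}_{k-i}\|,i))$ for all $k\ge0$ and all pairs of solutions sharing the same control input sequence. A state estimator is a sequence of maps $\hat{x}_k=\Psi_k(\bar{x}_0,\bar{\boldsymbol{v}}_{[0,k]},\boldsymbol{u}_{[0,k-1]},\boldsymbol{y}_{[0,k]})$; it is an unknown input state estimator if there exist $\beta\in\mathcal{K}_\infty$, $\beta_0\in\mathcal{KL}$ and a summable $\beta_v\in\mathcal{KL}$ such that $\beta(\|x_k-\hat{x}_k\|)\le\beta_0(\|x_0-\bar{x}_0\|,k)+\sum_{i=0}^k\beta_v(\|v_{k-i}-\bar{v}_{k-i}\|,i)$ for all $k\ge0$, all priors and every trajectory of the system. *)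

From HB Require Import structures.
From mathcomp Require Import all_boot all_order all_algebra.
From mathcomp Require Import all_classical all_reals all_analysis.
Set Implicit Arguments. Unset Strict Implicit. Unset Printing Implicit Defensive.
Import Order.TTheory GRing.Theory Num.Theory.
Import numFieldNormedType.Exports.
Local Open Scope classical_set_scope.
Local Open Scope ring_scope.

Section Defs.
Variable R : realType.

Definition classK (a : R -> R) : Prop :=
  [/\ a 0 = 0,
      {within [set x : R | 0 <= x], continuous a} &
      forall s t : R, 0 <= s -> s < t -> a s < a t].

Definition classKinf (a : R -> R) : Prop :=
  classK a /\ (a x @[x --> +oo] --> +oo).

Definition classKL (b : R -> nat -> R) : Prop :=
  (forall t : nat, classK (fun r => b r t)) /\
  (forall r : R, 0 <= r ->
     (forall t : nat, b r t.+1 <= b r t) /\ (b r t @[t --> \oo] --> 0)).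

Definition summableKL (b : R -> nat -> R) : Prop :=
  classKL b /\ exists a : R -> R, classK a /\
    forall r : R, 0 <= r -> forall T : nat, \sum_(k < T) b r k <= a r.

Definition Kinv (a : R -> R) (r : R) : R := xget 0 [set s : R | 0 <= s /\ a s = r].

Definition C1 (U W : normedModType R) (F : U -> W) : Prop :=
  (forall z, differentiable F z) /\ (forall d : U, continuous (fun z => 'd F z d)).

End Defs.

Section System.
Variable R : realType.
Variables (n m q r p : nat).
Variable f : 'rV[R]_n -> 'rV[R]_m -> 'rV[R]_q -> 'rV[R]_n.
Variable h : 'rV[R]_n -> 'rV[R]_r -> 'rV[R]_p.
Variables (Xs : set 'rV[R]_n) (Us : set 'rV[R]_m) (Vs : set 'rV[R]_r) (Ys : set 'rV[R]_p).

(* f and h continuously differentiable (as maps on the product spaces) *)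
Definition f_unc (z : 'rV[R]_n * 'rV[R]_m * 'rV[R]_q) : 'rV[R]_n := f z.1.1 z.1.2 z.2.
Definition h_unc (z : 'rV[R]_n * 'rV[R]_r) : 'rV[R]_p := h z.1 z.2.

Definition solution (x : nat -> 'rV[R]_n) (u : nat -> 'rV[R]_m) (w : nat -> 'rV[R]_q)
    (v : nat -> 'rV[R]_r) (y : nat -> 'rV[R]_p) : Prop :=
  forall k : nat, [/\ Xs (x k), Us (u k), Vs (v k) & Ys (y k)] /\
                  x k.+1 = f (x k) (u k) (w k) /\ y k = h (x k) (v k).

Definition strongly_nonlinearly_detectable : Prop :=
  exists (al : R -> R) (al0 alv aly : R -> nat -> R),
    [/\ classKinf al, classKL al0, summableKL alv, summableKL aly &
    forall x u w v y xt wt vt yt,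
      solution x u w v y -> solution xt u wt vt yt ->
      forall k : nat,
        al `|x k - xt k| <= al0 `|x 0 - xt 0| k
          + \sum_(i < k.+1) (alv `|v (k - i)%N - vt (k - i)%N| i
                             + aly `|y (k - i)%N - yt (k - i)%N| i)].

Variables (mu : R) (al2 sigv sigy : R -> R) (N : nat).
Variables (xbar0 : 'rV[R]_n) (vbar : nat -> 'rV[R]_r).
Variables (u : nat -> 'rV[R]_m) (y : nat -> 'rV[R]_p).

Definition Nk (k : nat) : nat := minn N k.

(* decision variables at time k: xhat_{k-N_k|k}, (vhat_{j|k})_j, (what_{j|k})_j,
   the latter two indexed by absolute time j *)
Definition cand : Type := ('rV[R]_n * (nat -> 'rV[R]_r) * (nat -> 'rV[R]_q))%type.

(* xpred c t i = xhat_{t+i|k}, predicted from xhat_{t|k} = c.1.1 *)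
Fixpoint xpred (c : cand) (t i : nat) : 'rV[R]_n :=
  match i with
  | 0 => c.1.1
  | i'.+1 => f (xpred c t i') (u (t + i')%N) (c.2 (t + i')%N)
  end.

Definition feasible (k : nat) (c : cand) : Prop :=
  forall i : nat, (i <= Nk k)%N ->
    [/\ Xs (xpred c (k - Nk k)%N i), Vs (c.1.2 (k - Nk k + i)%N) &
        Ys (h (xpred c (k - Nk k)%N i) (c.1.2 (k - Nk k + i)%N))].

Definition mhe_cost (k : nat) (prior : 'rV[R]_n) (c : cand) : R :=
  mu ^+ Nk k * al2 (2 * `|c.1.1 - prior|)
  + \sum_(j < (Nk k).+1) 2 * mu ^ (j%:Z - 1) * sigv (2 * `|c.1.2 (k - j)%N - vbar (k - j)%N|)
  + \sum_(j < (Nk k).+1) 2 * mu ^ (j%:Z - 1)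
        * sigy `|y (k - j)%N - h (xpred c (k - Nk k)%N (Nk k - j)%N) (c.1.2 (k - j)%N)|.

Definition mhe_estimate (sol : nat -> cand) (k : nat) : 'rV[R]_n :=
  xpred (sol k) (k - Nk k)%N (Nk k).

Definition mhe_prior (sol : nat -> cand) (t : nat) : 'rV[R]_n :=
  if t == 0%N then xbar0 else mhe_estimate sol t.

Definition mhe_run (sol : nat -> cand) : Prop :=
  forall k : nat, feasible k (sol k) /\
    forall c : cand, feasible k c ->
      mhe_cost k (mhe_prior sol (k - Nk k)%N) (sol k)
        <= mhe_cost k (mhe_prior sol (k - Nk k)%N) c.

End System.

(* Along a feasible horizon the incremental Lyapunov function [Vf] contracts by
   [mu] per step, up to the mismatch of the candidate with the measured outputs
   and the true disturbances.  The true trajectory is feasible and fits the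
   outputs exactly, so optimality bounds the error at the end of the horizon by
   [2 mu^N_k al2 (2 |x_(k-N_k) - xhat_(k-N_k)|)] plus weighted disturbance
   terms.  The horizon condition turns the first term into
   [rho Vf (x_(k-N)) (xhat_(k-N))], i.e. [Vf] contracts by [rho] every [N] steps;
   with [lam^N >= (1 + rho) / 2 > rho] an induction bounds [Vf] geometrically in
   [lam^k], and [al1] turns this into the estimator bound. *)

From HB Require Import structures.
From mathcomp Require Import all_boot all_order all_algebra.
From mathcomp Require Import all_classical all_reals all_analysis.
From mathcomp Require Import ring lra zify.
Set Implicit Arguments. Unset Strict Implicit. Unset Printing Implicit Defensive.
Import Order.TTheory GRing.Theory Num.Theory.
Import numFieldNormedType.Exports.
Local Open Scope classical_set_scope.
Local Open Scope ring_scope.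

Section ComparisonFunctions.
Variable R : realType.
Implicit Types (a : R -> R) (s t : R).

Lemma classK_ge0 a s : classK a -> 0 <= s -> 0 <= a s.
Proof.
case=> a0 _ aup; rewrite le_eqVlt => /orP[/eqP<-|s0]; first by rewrite a0.
by rewrite -a0 ltW // aup.
Qed.

Lemma classK_gt0 a s : classK a -> 0 < s -> 0 < a s.
Proof. by case=> a0 _ aup s0; rewrite -a0 aup. Qed.

Lemma classK_ler a s t : classK a -> 0 <= s -> 0 <= t -> (a s <= a t) = (s <= t).
Proof.
case=> _ _ aup s0 t0; apply/idP/idP => [|].
  by apply: contraTT; rewrite -!ltNge; exact: aup.
by rewrite le_eqVlt => /orP[/eqP->//|/(aup _ _ s0)/ltW].
Qed.

Lemma classK_addle a s t : classK a -> 0 <= s -> 0 <= t ->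
  a (s + t) <= a (2 * s) + a (2 * t).
Proof.
move=> Ka s0 t0.
have a2s : 0 <= a (2 * s) by apply: classK_ge0 Ka _; lra.
have a2t : 0 <= a (2 * t) by apply: classK_ge0 Ka _; lra.
have [st|ts] := leP s t.
  suff : a (s + t) <= a (2 * t) by lra.
  by rewrite (classK_ler Ka); lra.
suff : a (s + t) <= a (2 * s) by lra.
by rewrite (classK_ler Ka); lra.
Qed.

Lemma classK_dist_split a (V : normedZmodType R) (x z c : V) : classK a ->
  a `|x - z| <= a (2 * `|x - c|) + a (2 * `|z - c|).
Proof.
move=> Ka; apply: le_trans (classK_addle Ka (normr_ge0 _) (normr_ge0 _)).
by rewrite (classK_ler Ka) ?addr_ge0 // (distrC z); exact: ler_distD.
Qed.

Lemma within_continuous_scale a (b : R) : 0 < b ->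
  {within [set x : R | 0 <= x], continuous a} ->
  {within [set x : R | 0 <= x], continuous (fun s => a (b * s))}.
Proof.
move=> b0; rewrite !subspace_continuousP => ca x x0.
have scale : (fun s => b * s) @ within [set x : R | 0 <= x] (nbhs x)
    --> within [set x : R | 0 <= x] (nbhs (b * x)).
  move=> P HP; have cb : (fun s => b * s) @ nbhs x --> b * x.
    by apply: cvgMl_tmp; apply: cvg_id.
  have near_bx : nbhs x (fun s => 0 <= b * s -> P (b * s)) := cb _ HP.
  change (nbhs x (fun s => 0 <= s -> P (b * s))).
  apply: filterS near_bx => s Ps s0.
  by apply: Ps; rewrite mulr_ge0 // ltW.
apply: cvg_comp scale (ca _ _).
by rewrite /= mulr_ge0 // ltW.
Qed.

Lemma classK_scale a (c b : R) : classK a -> 0 < c -> 0 < b ->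
  classK (fun s => c * a (b * s)).
Proof.
move=> [a0 ac aup] c0 b0; split.
- by rewrite mulr0 a0 mulr0.
- move: (within_continuous_scale b0 ac); rewrite !subspace_continuousP => ca x x0.
  exact: cvgMl_tmp (ca _ x0).
- by move=> s t s0 st; rewrite ltr_pM2l // aup ?ltr_pM2l // mulr_ge0 // ltW.
Qed.

Lemma classKinf_surj a t : classKinf a -> 0 <= t -> exists2 s, 0 <= s & a s = t.
Proof.
case=> Ka ainf t0.
have [b [tb b0]] : exists b, t <= a b /\ 0 <= b.
  have ta : \forall b \near +oo, t <= a b by apply: cvgry_ge.
  have pos : \forall b \near +oo, (0 : R) <= b := nbhs_pinfty_ge (num_real 0).
  exact: (@filter_ex _ _ (@proper_pinfty_nbhs R) _ (filterI ta pos)).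
have [a0 ac _] := Ka.
have [||s] := @IVT R a 0 b t b0 (continuous_subspaceW _ ac).
- by move=> z /=; rewrite in_itv /= => /andP[].
- by rewrite a0 ge_min le_max t0 tb orbT.
by rewrite in_itv /= => /andP[s0 _] <-; exists s.
Qed.

Lemma Kinv_spec a t : classKinf a -> 0 <= t -> 0 <= Kinv a t /\ a (Kinv a t) = t.
Proof.
move=> Ka t0; have [s s0 ast] := classKinf_surj Ka t0.
exact: (@xgetPex _ 0 [set s | 0 <= s /\ a s = t] (ex_intro _ s (conj s0 ast))).
Qed.

Lemma le_Kinv a d s : classKinf a -> 0 <= d -> a d <= s -> d <= Kinv a s.
Proof.
move=> Ka d0 ads; have s0 : 0 <= s := le_trans (classK_ge0 Ka.1 d0) ads.
have [inv0 invK] := Kinv_spec Ka s0.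
by rewrite -(classK_ler Ka.1 d0 inv0) invK.
Qed.

Lemma classK_Kinv_contract (a1 b : R -> R) rho d s : classKinf a1 -> classK b ->
  (forall s, 0 < s -> b (Kinv a1 s) < rho * s) ->
  0 <= d -> a1 d <= s -> b d <= rho * s.
Proof.
move=> Ka1 Kb small d0 a1ds.
have [s0|] := ltP 0 s.
  apply/ltW/(le_lt_trans _ (small _ s0)).
  have [inv0 _] := Kinv_spec Ka1 (ltW s0).
  by rewrite (classK_ler Kb) // le_Kinv.
move=> s_le0; have a1d0 := classK_ge0 Ka1.1 d0.
have -> : d = 0.
  apply/eqP; rewrite eq_le d0 andbT leNgt; apply/negP => /(classK_gt0 Ka1.1); lra.
have -> : s = 0 by lra.
by case: Kb => -> _ _; rewrite mulr0.
Qed.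

End ComparisonFunctions.

Section GeometricKL.
Variable R : realType.

Definition geoKL (c lam : R) (a : R -> R) : R -> nat -> R :=
  fun s t => c * lam ^+ t * a (2 * s).

Variables (c lam : R) (a : R -> R).
Hypotheses (Ka : classK a) (c0 : 0 < c) (lam01 : 0 < lam < 1).

Lemma geoKL_KL : classKL (geoKL c lam a).
Proof.
have /andP[lam0 lam1] := lam01; split => [t|s s0].
  by apply: classK_scale => //; rewrite mulr_gt0 // exprn_gt0.
have as0 : 0 <= a (2 * s) by apply: classK_ge0 Ka _; lra.
split => [t|].
  by rewrite /geoKL exprSr mulrA ler_wpM2r // ler_piMr ?mulr_ge0 ?exprn_ge0 ?ltW.
have -> : geoKL c lam a s = geometric (c * a (2 * s)) lam.
  by apply: funext => t; rewrite /geoKL /geometric /= mulrAC.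
by apply: cvg_geometric; rewrite ger0_norm // ltW.
Qed.

Lemma geoKL_summable : summableKL (geoKL c lam a).
Proof.
have /andP[lam0 lam1] := lam01; split; first exact: geoKL_KL.
exists (fun s => c / (1 - lam) * a (2 * s)); split.
  by apply: classK_scale => //; rewrite divr_gt0 // subr_gt0.
move=> s s0 T; have as0 : 0 <= a (2 * s) by apply: classK_ge0 Ka _; lra.
have lam_norm : `|lam| < 1 by rewrite ger0_norm ?ltW.
have := geometric_le_lim T (mulr_ge0 (ltW c0) as0) lam0 lam_norm.
rewrite /series /= big_mkord => geo.
rewrite mulrAC (eq_bigr (fun i : 'I_T => c * a (2 * s) * lam ^+ i)) // => i _.
by rewrite /geoKL mulrAC.
Qed.

End GeometricKL.

Lemma bernoulli_ineq (R : realDomainType) (a : R) N : 0 <= a <= 1 ->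
  1 - N%:R * a <= (1 - a) ^+ N.
Proof.
move=> /andP[a0 a1]; elim: N => [|N IH]; first by rewrite expr0 mul0r subr0.
have XN : 0 <= (1 - a) ^+ N by rewrite exprn_ge0 // subr_ge0.
have N0 : 0 <= N%:R :> R by [].
rewrite exprS -natr1; nra.
Qed.

Lemma exists_decay_rate (R : realFieldType) (rho : R) N : 0 <= rho < 1 ->
  exists2 lam : R, 0 < lam < 1 & (1 + rho) / 2 <= lam ^+ N.
Proof.
move=> /andP[rho0 rho1].
have N1 : 0 < N.+1%:R :> R by rewrite ltr0n.
have NE : N.+1%:R = N%:R + 1 :> R by rewrite -natr1.
have N0 : 0 <= N%:R :> R by [].
pose e := (1 - rho) / (2 * N.+1%:R).
have eN : e * (2 * N.+1%:R) = 1 - rho by rewrite /e mulfVK // mulf_neq0 ?pnatr_eq0.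
have e0 : 0 < e by rewrite divr_gt0 // ?mulr_gt0 //; lra.
have e1 : e <= 1 by move: eN; rewrite NE; nra.
exists (1 - e); first by apply/andP; split; move: eN; rewrite NE; nra.
have e01 : 0 <= e <= 1 by apply/andP; split; lra.
by have := bernoulli_ineq N e01; move: eN; rewrite NE; nra.
Qed.

Section Recursions.
Variable R : realFieldType.

(* The invariant carries the extra term [a i / mu] because each step of the
   recursion charges both [a i] and [a i.+1]. *)
Lemma horizon_chain (mu : R) (V a : nat -> R) (M : nat) :
  0 < mu <= 1 -> (forall i, 0 <= a i) ->
  (forall i, (i < M)%N -> V i.+1 <= mu * V i + a i + a i.+1) ->
  forall i, (i <= M)%N ->
  V i + a i / mu <= mu ^+ i * V 0%N + \sum_(j < i.+1) 2 * mu ^+ j / mu * a (i - j)%N.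
Proof.
move=> /andP[mu0 mu1] a_ge0 step; elim=> [_|i IH iM].
  rewrite big_ord1 subn0 expr0 mul1r mulr1.
  have : 0 <= a 0%N / mu by rewrite divr_ge0 // ltW.
  have -> : 2 / mu * a 0%N = 2 * (a 0%N / mu) by rewrite mulrAC mulrA.
  lra.
have shift : \sum_(j < i.+1) 2 * mu ^+ (bump 0 j) / mu * a (i.+1 - bump 0 j)%N
    = mu * \sum_(j < i.+1) 2 * mu ^+ j / mu * a (i - j)%N.
  by rewrite mulr_sumr; apply: eq_bigr => j _; rewrite /bump add1n subSS exprS; ring.
rewrite big_ord_recl subn0 shift expr0 mulr1 exprS -mulrA.
have IHmu := ler_wpM2l (ltW mu0) (IH (ltnW iM)).
have muV : mu * (a i / mu) = a i by rewrite mulrCA mulfV ?gt_eqF // mulr1.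
have a_div : a i.+1 <= a i.+1 / mu.
  by rewrite ler_pdivlMr // ler_piMr // a_ge0.
have -> : 2 / mu * a i.+1 = 2 * (a i.+1 / mu) by rewrite mulrAC mulrA.
move: IHmu (step i iM); rewrite mulrDr muV mulrDr; lra.
Qed.

Lemma convolution_contract (g d S : nat -> R) (rho : R) (N K : nat) :
  0 <= rho -> (forall t, 0 <= S t) ->
  (forall j, (j < N)%N -> d j <= g j) ->
  rho * g 0%N + d N <= g N ->
  (forall i, rho * g i <= g (N + i)%N) ->
  rho * \sum_(i < K.+1) g i * S (K - i)%N + \sum_(j < N.+1) d j * S (N + K - j)%N
   <= \sum_(i < (N + K).+1) g i * S (N + K - i)%N.
Proof.
move=> rho0 S0 dg g0N gN.
rewrite -addnS big_split_ord /= (big_ord_recr N) !(big_ord_recl K) /= subn0 addn0 !addKn.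
have early : \sum_(j < N) d j * S (N + K - j)%N <= \sum_(i < N) g i * S (N + K - i)%N.
  by apply: ler_sum => i _; rewrite ler_wpM2r ?dg.
have late : rho * \sum_(i < K) g (bump 0 i) * S (K - bump 0 i)%N
    <= \sum_(i < K) g (N + bump 0 i)%N * S (N + K - (N + bump 0 i))%N.
  rewrite mulr_sumr; apply: ler_sum => i _; rewrite subnDl mulrA.
  by rewrite ler_wpM2r.
have first : (rho * g 0%N + d N) * S K <= g N * S K by rewrite ler_wpM2r.
move: first; rewrite mulrDl mulrDr; lra.
Qed.

Lemma delayed_recursion (rho : R) (N : nat) (E W B D : nat -> R) :
  0 <= rho < 1 -> W 0%N <= B 0%N -> (forall t, (0 < t)%N -> W t = E t) ->
  (forall k, (k < N)%N -> E k <= B k) ->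
  (forall K, E (N + K)%N <= rho * W K + D (N + K)%N) ->
  (forall K, rho * B K + D (N + K)%N <= B (N + K)%N) ->
  forall k, E k <= B k.
Proof.
move=> /andP[rho0 rho1] W0 WE early late contract.
elim/ltn_ind => k IH; have [/early//|Nk] := ltnP k N.
have [K kE] : exists K, k = (N + K)%N by exists (k - N)%N; rewrite subnKC.
subst k.
have [-> | K0] := posnP K.
  by have := ler_wpM2l rho0 W0; move: (late 0%N) (contract 0%N); lra.
have lateK := late K; rewrite WE // in lateK.
have [N0 | N0] := posnP N.
  (* for [N = 0] the late bound is self-referential and [rho < 1] solves it *)
  move: lateK (contract K); rewrite N0 add0n => EK BK.
  suff : (1 - rho) * (E K - B K) <= 0 by rewrite pmulr_rle0 ?subr_gt0 // subr_le0.
  by rewrite mulrBl !mulrBr !mul1r; lra.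
have EK : E K <= B K by apply: IH; rewrite -[X in (X < _)%N]add0n ltn_add2r.
by have := ler_wpM2l rho0 EK; move: lateK (contract K); lra.
Qed.

End Recursions.

Section DecayBound.
Variable R : realFieldType.

(* [input_gain mu rho * (1 - rho) / 2 = 4 / mu] bounds every weight of
   [horizon_noise]: see [contract_weight0]. *)
Definition input_gain (mu rho : R) : R := 8 / (mu * (1 - rho)).

Definition horizon_noise (mu : R) (S : nat -> R) (M k : nat) : R :=
  \sum_(j < M.+1) 4 * mu ^+ j / mu * S (k - j)%N.

Definition decay_bound (c lam A : R) (S : nat -> R) (k : nat) : R :=
  4 * lam ^+ k * A + \sum_(i < k.+1) c * lam ^+ i * S (k - i)%N.

Variables (mu rho lam : R) (N : nat).
Hypotheses (mu01 : 0 < mu <= 1) (rho01 : 0 <= rho < 1).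
Hypotheses (lam01 : 0 <= lam <= 1) (lamN : (1 + rho) / 2 <= lam ^+ N).
Variables (A : R) (S : nat -> R).
Hypotheses (A0 : 0 <= A) (S0 : forall t, 0 <= S t).

Local Notation C := (input_gain mu rho).

Let C0 : 0 <= C.
Proof.
case/andP: mu01 rho01 => mu0 _ /andP[_ rho1].
by rewrite divr_ge0 // mulr_ge0 //; lra.
Qed.

Let C_rho : C * (1 - rho) = 8 / mu.
Proof.
case/andP: mu01 rho01 => mu0 _ /andP[_ rho1].
have mu_neq0 : mu != 0 by rewrite gt_eqF.
have rho_neq1 : 1 - rho != 0 by rewrite subr_eq0 gt_eqF.
by rewrite /input_gain; field; rewrite mu_neq0 rho_neq1.
Qed.

Let mu_weight j : mu ^+ j / mu <= mu^-1.
Proof.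
case/andP: mu01 => mu0 mu1.
have mu_inv : 0 <= mu^-1 by rewrite invr_ge0 ltW.
by rewrite ler_piMl // exprn_ile1 // ltW.
Qed.

Let lam_ge j : (j <= N)%N -> (1 + rho) / 2 <= lam ^+ j.
Proof. by case/andP: lam01 => ? ? jN; apply: le_trans lamN _; exact: ler_wiXn2l. Qed.

Lemma input_weight_le j : (j <= N)%N -> 4 * mu ^+ j / mu <= C * lam ^+ j.
Proof.
move=> jN; have Cl := ler_wpM2l C0 (lam_ge jN); have := mu_weight j.
have Crho : 0 <= C * rho by rewrite mulr_ge0 //; case/andP: rho01.
rewrite -mulrA; move: C_rho; rewrite mulrBr mulr1 [8 / mu]mulrC; lra.
Qed.

Let rho_le_lamN : rho <= lam ^+ N.
Proof. by apply: le_trans lamN; case/andP: rho01 => _ rho1; lra. Qed.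

Lemma contract_weight0 : rho * (C * lam ^+ 0) + 4 * mu ^+ N / mu <= C * lam ^+ N.
Proof.
have Cl := ler_wpM2l C0 lamN; have := mu_weight N.
have Crho : 0 <= C * rho by rewrite mulr_ge0 //; case/andP: rho01.
rewrite expr0 mulr1 -mulrA; move: C_rho; rewrite mulrBr mulr1 [8 / mu]mulrC; lra.
Qed.

Lemma contract_weight i : rho * (C * lam ^+ i) <= C * lam ^+ (N + i).
Proof.
have lam0 : 0 <= lam ^+ i by rewrite exprn_ge0 //; case/andP: lam01.
by rewrite exprD mulrCA ler_wpM2l // ler_wpM2r // rho_le_lamN.
Qed.

Lemma le_decay_bound0 : A <= decay_bound C lam A S 0.
Proof.
rewrite /decay_bound big_ord1 !expr0 !mulr1 subn0.
by have := mulr_ge0 C0 (S0 0%N); move: (A0); lra.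
Qed.

Lemma decay_bound_early k : (k <= N)%N ->
  2 * mu ^+ k * A + horizon_noise mu S k k <= decay_bound C lam A S k.
Proof.
move=> kN; apply: lerD.
  rewrite ler_wpM2r //; have := lam_ge kN.
  have : mu ^+ k <= 1 by case/andP: mu01 => mu0 mu1; rewrite exprn_ile1 // ltW.
  by case/andP: rho01; lra.
apply: ler_sum => j _; rewrite ler_wpM2r // input_weight_le //.
exact: leq_trans (ltnSE (ltn_ord j)) kN.
Qed.

Lemma decay_bound_contract K :
  rho * decay_bound C lam A S K + horizon_noise mu S N (N + K)
    <= decay_bound C lam A S (N + K).
Proof.
have rho0 : 0 <= rho by case/andP: rho01.
have prior_term : rho * (4 * lam ^+ K * A) <= 4 * lam ^+ (N + K) * A.
  have lamA : 0 <= lam ^+ K * A by rewrite mulr_ge0 // exprn_ge0 //; case/andP: lam01.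
  by have := ler_wpM2r lamA rho_le_lamN; rewrite exprD; lra.
have := convolution_contract (g := fun i => C * lam ^+ i) (d := fun j => 4 * mu ^+ j / mu)
  K rho0 S0 (fun j jN => input_weight_le (ltnW jN)) contract_weight0 contract_weight.
rewrite /decay_bound /horizon_noise mulrDr; lra.
Qed.

End DecayBound.

Lemma exprz_pred (R : fieldType) (a : R) (j : nat) : a != 0 ->
  a ^ (j%:Z - 1) = a ^+ j / a.
Proof. by move=> a0; rewrite expfzDr // exprN1 -exprnP. Qed.

Section MovingHorizonEstimation.
Variables (R : realType) (n m q r p : nat).
Variable f : 'rV[R]_n -> 'rV[R]_m -> 'rV[R]_q -> 'rV[R]_n.
Variable h : 'rV[R]_n -> 'rV[R]_r -> 'rV[R]_p.
Variables (Xs : set 'rV[R]_n) (Us : set 'rV[R]_m) (Vs : set 'rV[R]_r) (Ys : set 'rV[R]_p).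
Variables (al1 al2 sigv sigy : R -> R) (mu : R) (Vf : 'rV[R]_n -> 'rV[R]_n -> R).
Hypotheses (Kal1 : classKinf al1) (Kal2 : classK al2).
Hypotheses (Ksigv : classK sigv) (Ksigy : classK sigy) (mu01 : 0 < mu < 1).
Hypothesis Vf_lb : forall x xt, Xs x -> Xs xt -> al1 `|x - xt| <= Vf x xt.
Hypothesis Vf_ub : forall x xt, Xs x -> Xs xt -> Vf x xt <= al2 `|x - xt|.
Hypothesis Vf_step : forall x uu w v yy xt wt vt yt vp vtp,
  Xs x -> Us uu -> Vs v -> Ys yy -> Xs xt -> Vs vt -> Ys yt -> Vs vp -> Vs vtp ->
  yy = h x v -> yt = h xt vt ->
  Ys (h (f x uu w) vp) -> Ys (h (f xt uu wt) vtp) ->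
  Vf (f x uu w) (f xt uu wt)
    <= mu * Vf x xt + sigv `|v - vt| + sigv `|vp - vtp|
       + sigy `|yy - yt| + sigy `|h (f x uu w) vp - h (f xt uu wt) vtp|.
Variables (N : nat) (xbar0 : 'rV[R]_n) (vbar : nat -> 'rV[R]_r).
Hypothesis xbar0_in : Xs xbar0.
Variables (x : nat -> 'rV[R]_n) (u : nat -> 'rV[R]_m) (w : nat -> 'rV[R]_q).
Variables (v : nat -> 'rV[R]_r) (y : nat -> 'rV[R]_p).
Hypothesis Hsol : solution f h Xs Us Vs Ys x u w v y.
Variable sol : nat -> cand R n q r.
Hypothesis Hrun : mhe_run f h Xs Vs Ys mu al2 sigv sigy N xbar0 vbar u y sol.

Local Notation M k := (Nk N k).
Local Notation start k := (k - Nk N k)%N.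
Local Notation est := (mhe_estimate f N u sol).
Local Notation prior := (mhe_prior f N xbar0 u sol).
Local Notation feas := (feasible f h Xs Vs Ys N u).
Local Notation cost := (mhe_cost f h mu al2 sigv sigy N vbar u y).
Local Notation noise := (fun t => sigv (2 * `|v t - vbar t|)).

Let mu01' : 0 < mu <= 1.
Proof. by case/andP: mu01 => -> /ltW. Qed.

Let mu_neq0 : mu != 0.
Proof. by rewrite gt_eqF //; case/andP: mu01. Qed.

Let mu_ge0 : 0 <= mu.
Proof. by case/andP: mu01 => /ltW. Qed.

Lemma mhe_costE k P c : cost k P c =
  mu ^+ M k * al2 (2 * `|c.1.1 - P|)
  + \sum_(j < (M k).+1) 2 * mu ^+ j / mu * sigv (2 * `|c.1.2 (k - j)%N - vbar (k - j)%N|)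
  + \sum_(j < (M k).+1) 2 * mu ^+ j / mu
      * sigy `|y (k - j)%N - h (xpred f u c (start k) (M k - j)) (c.1.2 (k - j)%N)|.
Proof.
by rewrite /mhe_cost; congr (_ + _ + _); apply: eq_bigr => j _; rewrite exprz_pred // mulrA.
Qed.

Definition fit_error k (c : cand R n q r) l : R :=
  sigv `|v (start k + l)%N - c.1.2 (start k + l)%N|
  + sigy `|y (start k + l)%N - h (xpred f u c (start k) l) (c.1.2 (start k + l)%N)|.

Lemma fit_error_ge0 k c l : 0 <= fit_error k c l.
Proof. by rewrite addr_ge0 // classK_ge0. Qed.

Lemma fit_error_step k c i : feas k c -> (i < M k)%N ->
  Vf (x (start k + i.+1)%N) (xpred f u c (start k) i.+1)
    <= mu * Vf (x (start k + i)%N) (xpred f u c (start k) i)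
       + fit_error k c i + fit_error k c i.+1.
Proof.
move=> Hc iM.
have [[Xx Uu Vv Yy] [xS yE]] := Hsol (start k + i).
have [[_ _ Vv1 Yy1] [_ yE1]] := Hsol (start k + i).+1.
have [Xh Vh Yh] := Hc i (ltnW iM).
have [_ Vh1 Yh1] := Hc i.+1 iM.
rewrite -addnS in Vv1 Yy1 yE1 xS.
have := Vf_step (w := w (start k + i)) (wt := c.2 (start k + i)%N)
  Xx Uu Vv Yy Xh Vh Yh Vv1 Vh1 yE erefl.
rewrite -xS -yE1 => /(_ Yy1 Yh1).
by rewrite /fit_error /=; lra.
Qed.

Lemma fit_error_chain k c : feas k c ->
  Vf (x k) (xpred f u c (start k) (M k)) + fit_error k c (M k) / mu
    <= mu ^+ M k * Vf (x (start k)) c.1.1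
       + \sum_(j < (M k).+1) 2 * mu ^+ j / mu * fit_error k c (M k - j).
Proof.
move=> Hc; have := horizon_chain (V := fun i => Vf (x (start k + i)%N) (xpred f u c (start k) i))
  mu01' (fit_error_ge0 k c) (fun i => fit_error_step Hc (i := i)) (leqnn (M k)).
by rewrite subnK ?addn0 // /Nk geq_minr.
Qed.

Let start_addB k j : (j <= M k)%N -> (start k + (M k - j))%N = (k - j)%N.
Proof. by have : (M k <= k)%N := geq_minr N k; lia. Qed.

Lemma xpred_solution t i : xpred f u (x t, v, w) t i = x (t + i)%N.
Proof.
elim: i => [|i IH] /=; first by rewrite addn0.
by rewrite IH addnS; have [_ [<- _]] := Hsol (t + i)%N.
Qed.

Lemma solution_feasible k : feas k (x (start k), v, w).
Proof.
move=> i _; rewrite xpred_solution /=.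
by have [[Xx _ Vv Yy] [_ <-]] := Hsol (start k + i)%N.
Qed.

Lemma solution_cost k P : cost k P (x (start k), v, w) =
  mu ^+ M k * al2 (2 * `|x (start k) - P|)
  + \sum_(j < (M k).+1) 2 * mu ^+ j / mu * noise (k - j)%N.
Proof.
rewrite mhe_costE -[RHS]addr0; congr (_ + _); apply: big1 => j _.
rewrite xpred_solution /= start_addB; last exact: ltnSE (ltn_ord j).
by have [_ [_ <-]] := Hsol (k - j)%N; rewrite subrr normr0; case: Ksigy => -> _ _; rewrite mulr0.
Qed.

Lemma fit_error_le_cost k c P :
  mu ^+ M k * al2 (2 * `|c.1.1 - P|)
  + \sum_(j < (M k).+1) 2 * mu ^+ j / mu * fit_error k c (M k - j)
    <= cost k P c + \sum_(j < (M k).+1) 2 * mu ^+ j / mu * noise (k - j)%N.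
Proof.
rewrite mhe_costE -!addrA lerD2l -!big_split ler_sum // => j _ /=.
rewrite -!mulrDr ler_wpM2l ?divr_ge0 ?mulr_ge0 ?exprn_ge0 //.
rewrite /fit_error start_addB; last exact: ltnSE (ltn_ord j).
have := classK_dist_split (v (k - j)%N) (c.1.2 (k - j)%N) (vbar (k - j)%N) Ksigv.
lra.
Qed.

Lemma mhe_lyapunov_horizon k :
  Vf (x k) (est k) <= 2 * mu ^+ M k * al2 (2 * `|x (start k) - prior (start k)|)
                      + horizon_noise mu noise (M k) k.
Proof.
have [Hc opt] := Hrun k; set c := sol k; set P := prior (start k).
have chain := fit_error_chain Hc.
have costs := opt _ (solution_feasible (k := k)); rewrite solution_cost -/c -/P in costs.
have fit_cost := fit_error_le_cost k c P.
have [x_in _ _] := (Hsol (start k)).1.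
have [xh_in _ _] := Hc 0%N (leq0n _).
have split0 : Vf (x (start k)) c.1.1 <= al2 (2 * `|x (start k) - P|) + al2 (2 * `|c.1.1 - P|).
  exact: le_trans (Vf_ub x_in xh_in) (classK_dist_split _ _ _ Kal2).
have muM : 0 <= mu ^+ M k by rewrite exprn_ge0.
have fitM : 0 <= fit_error k c (M k) / mu by rewrite divr_ge0 ?fit_error_ge0.
have noiseE : horizon_noise mu noise (M k) k
    = 2 * \sum_(j < (M k).+1) 2 * mu ^+ j / mu * noise (k - j)%N.
  by rewrite /horizon_noise mulr_sumr; apply: eq_bigr => j _; ring.
rewrite noiseE; have := ler_wpM2l muM split0; rewrite mulrDr.
change (est k) with (xpred f u c (start k) (M k)).
lra.
Qed.

Lemma mhe_estimate_in k : Xs (est k).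
Proof. by have [Hc _] := Hrun k; have [] := Hc (M k) (leqnn _). Qed.

Lemma mhe_prior_in t : Xs (prior t).
Proof. by rewrite /mhe_prior; case: eqP => _ //; exact: mhe_estimate_in. Qed.

Lemma mhe_lyapunov_early k : (k < N)%N ->
  Vf (x k) (est k) <= 2 * mu ^+ k * al2 (2 * `|x 0%N - xbar0|) + horizon_noise mu noise k k.
Proof.
move=> kN; have Mk : M k = k by apply/minn_idPr/ltnW.
by have := mhe_lyapunov_horizon k; rewrite Mk subnn.
Qed.

Variable rho : R.
Hypothesis small_horizon : forall s, 0 < s -> 2 * mu ^+ N * al2 (2 * Kinv al1 s) < rho * s.

Lemma mhe_lyapunov_late K :
  Vf (x (N + K)%N) (est (N + K)%N)
    <= rho * Vf (x K) (prior K) + horizon_noise mu noise N (N + K).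
Proof.
have MNK : M (N + K)%N = N by apply/minn_idPl/leq_addr.
have := mhe_lyapunov_horizon (N + K); rewrite MNK addKn => /le_trans; apply.
have [xK _ _ _] := (Hsol K).1.
rewrite lerD2r; apply: (classK_Kinv_contract (b := fun s => 2 * mu ^+ N * al2 (2 * s)) Kal1).
- by apply: classK_scale => //; rewrite mulr_gt0 ?exprn_gt0 //; case/andP: mu01.
- exact: small_horizon.
- exact: normr_ge0.
- exact: Vf_lb xK (mhe_prior_in K).
Qed.

Variable lam : R.
Hypotheses (rho01 : 0 <= rho < 1) (lam01 : 0 < lam < 1) (lamN : (1 + rho) / 2 <= lam ^+ N).

Lemma mhe_lyapunov_decay k :
  Vf (x k) (est k)
    <= decay_bound (input_gain mu rho) lam (al2 (2 * `|x 0%N - xbar0|)) noise k.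
Proof.
have lam01' : 0 <= lam <= 1 by case/andP: lam01 => /ltW -> /ltW.
have A0 : 0 <= al2 (2 * `|x 0%N - xbar0|) by rewrite classK_ge0 // mulr_ge0.
have noise0 : forall t, 0 <= noise t by move=> t; rewrite classK_ge0 // mulr_ge0.
move: k; apply: (delayed_recursion (E := fun k => Vf (x k) (est k))
  (W := fun t => Vf (x t) (prior t)) (D := horizon_noise mu noise N) (N := N) rho01)
  => [||t tN|K|K].
- have [x0 _ _ _] := (Hsol 0%N).1.
  apply: le_trans (Vf_ub x0 xbar0_in) (le_trans _ (le_decay_bound0 lam mu01' rho01 A0 noise0)).
  have d0 := normr_ge0 (x 0%N - xbar0).
  by rewrite (classK_ler Kal2) ?mulr_ge0 //; lra.
- by case.
- apply: le_trans (mhe_lyapunov_early tN) _.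
  apply: (decay_bound_early mu01' rho01 lam01' lamN A0 noise0 (ltnW tN)).
- exact: mhe_lyapunov_late.
- apply: (decay_bound_contract mu01' rho01 lam01' lamN A0 noise0 K).
Qed.

End MovingHorizonEstimation.

Theorem theorem3 (R : realType) (n m q r p : nat)
  (f : 'rV[R]_n -> 'rV[R]_m -> 'rV[R]_q -> 'rV[R]_n)
  (h : 'rV[R]_n -> 'rV[R]_r -> 'rV[R]_p)
  (Xs : set 'rV[R]_n) (Us : set 'rV[R]_m) (Vs : set 'rV[R]_r) (Ys : set 'rV[R]_p)
  (Hf : C1 (f_unc f)) (Hh : C1 (h_unc h))
  (Hdet : strongly_nonlinearly_detectable f h Xs Us Vs Ys)
  (al1 al2 sigv sigy : R -> R) (mu : R) (Vf : 'rV[R]_n -> 'rV[R]_n -> R)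
  (Hal1 : classKinf al1) (Hal2 : classKinf al2)
  (Hsigv : classK sigv) (Hsigy : classK sigy)
  (Hmu : 0 < mu < 1)
  (HVnn : forall x xt, Xs x -> Xs xt -> 0 <= Vf x xt)
  (HVsand : forall x xt, Xs x -> Xs xt ->
      al1 `|x - xt| <= Vf x xt /\ Vf x xt <= al2 `|x - xt|)
  (HVdec : forall x uu w v yy xt wt vt yt vp vtp,
      Xs x -> Us uu -> Vs v -> Ys yy ->
      Xs xt -> Vs vt -> Ys yt ->
      Vs vp -> Vs vtp ->
      yy = h x v -> yt = h xt vt ->
      Ys (h (f x uu w) vp) -> Ys (h (f xt uu wt) vtp) ->
      Vf (f x uu w) (f xt uu wt)
        <= mu * Vf x xt + sigv `|v - vt| + sigv `|vp - vtp|
           + sigy `|yy - yt| + sigy `|h (f x uu w) vp - h (f xt uu wt) vtp|)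
  (N : nat)
  (HN : exists rho : R, 0 < rho < 1 /\
        forall s : R, 0 < s -> 2 * mu ^+ N * al2 (2 * Kinv al1 s) < rho * s) :
  exists (be : R -> R) (be0 bev : R -> nat -> R),
    [/\ classKinf be, classKL be0, summableKL bev &
    forall (xbar0 : 'rV[R]_n) (vbar : nat -> 'rV[R]_r),
      Xs xbar0 -> (forall i, Vs (vbar i)) ->
    forall x u w v y, solution f h Xs Us Vs Ys x u w v y ->
    forall sol : nat -> cand R n q r,
      mhe_run f h Xs Vs Ys mu al2 sigv sigy N xbar0 vbar u y sol ->
    forall k : nat,
      be `|x k - mhe_estimate f N u sol k|
        <= be0 `|x 0 - xbar0| k
           + \sum_(i < k.+1) bev `|v (k - i)%N - vbar (k - i)%N| i].
Proof.
have [rho [/andP[rho0 rho1] small_horizon]] := HN.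
have rho01 : 0 <= rho < 1 by rewrite ltW.
have [lam lam01 lamN] := exists_decay_rate N rho01.
have gain0 : 0 < input_gain mu rho.
  by case/andP: Hmu => mu0 _; rewrite divr_gt0 // mulr_gt0 // subr_gt0.
exists al1, (geoKL 4 lam al2), (geoKL (input_gain mu rho) lam sigv); split => //.
- exact: geoKL_KL Hal2.1 _ lam01.
- exact: geoKL_summable.
move=> xbar0 vbar xbar0_in _ x u w v y Hsol sol Hrun k.
have [xk _ _ _] := (Hsol k).1.
have Vf_lb x1 x2 Xx1 Xx2 := (HVsand x1 x2 Xx1 Xx2).1.
have Vf_ub x1 x2 Xx1 Xx2 := (HVsand x1 x2 Xx1 Xx2).2.
apply: le_trans (Vf_lb _ _ xk (mhe_estimate_in Hrun k)) _.
exact (mhe_lyapunov_decay Hal1 Hal2.1 Hsigv Hsigy Hmu Vf_lb Vf_ub HVdec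
  xbar0_in Hsol Hrun small_horizon rho01 lam01 lamN k).
Qed.
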